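(* Let $L$ be a finite periodic (toroidal) square lattice in two dimensions with lattice spacing $\Delta>0$, and for functions $f$ on $L$ write $\int f=\Delta^2\sum_{x\in L} f(x)$. Let $-\partial^2$ denote the lattice Laplacian (the finite-difference Laplacian, a positive semidefinite self-adjoint operator on functions on $L$). Fix $N\ge 1$, a constant $\mu>0$, a field $\hat M:L\to\{\text{real diagonal } N\times N \text{ matrices}\}$ and a source field $J:L\to\{\text{real } N\times N\text{ matrices}\}$, $x\mapsto (J_{ab}(x))_{a,b=1}^N$. For a field $O:L\to O(N)$ set $M(x)=O(x)^t\hat M(x)O(x)$ and let $K=K(O)$ be the operator on $\mathbb{C}^N$-valued functions on $L$ given by $$K_{aa'}=(-\partial^2+\mu)\,\delta_{aa'}-i\,M_{aa'},$$ where $M$ acts by pointwise multiplication by the matrix $M(x)$. Then $K(O)$ is invertible, and the function $$O\longmapsto \exp\Big[-\tfrac12\int J_{ab}\,(K_{aa'})^{-1}J_{a'b}\Big]$$ (summation over repeated indices $a,a',b$, the inverse $K^{-1}$ acting on the functions $x\mapsto J_{a'b}(x)$, $a'=1,\dots,N$, for each fixed $b$) is Lipschitz on the space of fields $O:L\to O(N)$ with respect to the metric $$d(O,O')=\int \|O-O'\|_{HS}=\Delta^2\sum_{x\in L}\|O(x)-O'(x)\|_{HS},$$ where $\|\cdot\|_{HS}$ is the Hilbert–Schmidt norm; i.e. there is a constant $C$ (depending on $J,\hat M,\mu$ and the lattice, but not on $O,O'$) such that the absolute difference of the function's values at $O$ and $O'$ is at most $C\,d(O,O')$.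
   Context: This is the lattice regularization of the $O(N)$ principal chiral model: $\hat M$ is the diagonalized (and contour-shifted by $i\mu$) Lagrange multiplier field, $O$ the pointwise diagonalizing orthogonal matrices, and $K$ the resulting quadratic form kernel after integrating out the original field. Indices $a,a',b$ range over $1,\dots,N$. *)

From HB Require Import structures.
From mathcomp Require Import all_boot all_order all_algebra.
From mathcomp Require Import all_classical all_reals all_analysis.
From mathcomp Require Import complex.
Set Implicit Arguments. Unset Strict Implicit. Unset Printing Implicit Defensive.
Import Order.TTheory GRing.Theory Num.Theory.
Local Open Scope ring_scope.
Local Open Scope complex_scope.

Section PCM.
Variable R : realType.

Definition cexp (z : R[i]) : R[i] :=
  (expR (complex.Re z))%:C * (cos (complex.Im z) +i* sin (complex.Im z)).

(* periodic square lattice with (n+1) x (n+1) sites *)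
Definition site (n : nat) := ('I_n.+1 * 'I_n.+1)%type.

Definition orthogonal_mx (N : nat) (A : 'M[R]_N) : Prop := A^T *m A = 1%:M.

Definition hs_norm (N : nat) (A : 'M[R]_N) : R :=
  Num.sqrt (\sum_(i < N) \sum_(j < N) A i j ^+ 2).

Definition field_dist (n N : nat) (Delta : R) (O O' : site n -> 'M[R]_N) : R :=
  Delta ^+ 2 * \sum_(x : site n) hs_norm (O x - O' x).

(* matrix of the lattice Laplacian -d^2 (periodic, spacing Delta):
   (-d^2 f)(x) = Delta^-2 sum_{mu=1,2} (2 f(x) - f(x+e_mu) - f(x-e_mu)) *)
Definition lap (n : nat) (Delta : R) (x y : site n) : R :=
  Delta ^- 2 * (4 * (x == y)%:R
    - ((y == (ordS x.1, x.2))%:R + (y == (ord_pred x.1, x.2))%:R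
       + (y == (x.1, ordS x.2))%:R + (y == (x.1, ord_pred x.2))%:R)).

(* index set for C^N-valued functions on the lattice *)
Definition idx (n N : nat) := (site n * 'I_N)%type.

Definition Mfield (n N : nat) (Mhat O : site n -> 'M[R]_N) (x : site n) : 'M[R]_N :=
  (O x)^T *m Mhat x *m O x.

(* K_{aa'} = (-d^2 + mu) delta_{aa'} - i M_{aa'}, as a matrix on
   C^{L x N} (indices enumerated through enum_val) *)
Definition Kmx (n N : nat) (Delta mu : R) (Mhat O : site n -> 'M[R]_N)
  : 'M[R[i]]_#|{: idx n N}| :=
  \matrix_(i, j)
    let: (x, a) := enum_val i in let: (y, a') := enum_val j in
    ((lap Delta x y + mu * (x == y)%:R) * (a == a')%:R)%:C
    - 'i * ((x == y)%:R * Mfield Mhat O x a a')%:C.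

Definition quad_form (n N : nat) (Delta mu : R) (Mhat O J : site n -> 'M[R]_N)
  : R[i] :=
  - (2%:R)^-1 * ((Delta ^+ 2)%:C *
    \sum_(x : site n) \sum_(a < N) \sum_(b < N)
      (J x a b)%:C *
      \sum_(j : 'I_#|{: idx n N}|)
        invmx (Kmx Delta mu Mhat O) (enum_rank (x, a)) j
        * (J (enum_val j).1 (enum_val j).2 b)%:C).

Definition Zfun (n N : nat) (Delta mu : R) (Mhat O J : site n -> 'M[R]_N)
  : R[i] := cexp (quad_form Delta mu Mhat O J).

End PCM.

From HB Require Import structures.
From mathcomp Require Import all_boot all_order all_algebra.
From mathcomp Require Import all_classical all_reals all_analysis.
From mathcomp Require Import complex ring lra.
Import Order.TTheory GRing.Theory Num.Theory numFieldNormedType.Exports.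
Set Implicit Arguments. Unset Strict Implicit. Unset Printing Implicit Defensive.
Local Open Scope ring_scope.
Local Open Scope complex_scope.

(* Write K = A - iM, where A = -d^2 + mu is real symmetric with A >= mu and M is
   real symmetric.  For w = p + iq the real part of <w, Kw> is
   <p, Ap> + <q, Aq> >= mu |w|^2: the cross terms <p, Mq> - <q, Mp> cancel by
   symmetry of M.  Hence |Kw| >= mu |w|, so K is invertible, and for real J the
   form <J, K^-1 J> has nonnegative real part; the exponent thus lies in the
   half-plane Re z <= 0, where exp is 2-Lipschitz for the norm |Re z| + |Im z|.
   The resolvent identity K^-1 - K'^-1 = K^-1 (K' - K) K'^-1 moves the form by
   at most |M' - M| |J|^2 / mu^2, and the operator norm |M' - M| is at most
   sum_x |M'(x) - M(x)|_HS <= 2 sqrt N |Mhat|_HS sum_x |O(x) - O'(x)|_HS,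
   because orthogonal matrices have Hilbert-Schmidt norm sqrt N. *)

Section LipschitzBounds.
Variable R : realType.

Lemma dist_le_of_derive (f df : R -> R) (x y : R) :
  (forall z : R, is_derive z (1 : R) f (df z)) ->
  (forall z, Num.min x y <= z <= Num.max x y -> `|df z| <= 1) ->
  `|f x - f y| <= `|x - y|.
Proof.
wlog yx : x y / y <= x.
  move=> wlog_xy fd dfb; have [/wlog_xy|/ltW/wlog_xy] := leP y x; first exact.
  by rewrite distrC (distrC x) minC maxC; apply.
move=> fd dfb.
have fc : continuous f.
  by move=> z; apply: differentiable_continuous; apply/derivable1_diffP; case: (fd z).
have [c /[!in_itv] /= cyx ->] :=
  MVT_segment yx (fun z _ => fd z) (continuous_subspaceT fc).
rewrite normrM ler_piMl ?normr_ge0 // dfb //.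
by rewrite (min_idPr yx) (max_idPl yx).
Qed.

Lemma dist_cos_le (x y : R) : `|cos x - cos y| <= `|x - y|.
Proof. by apply: dist_le_of_derive => z _; rewrite normrN sin_max. Qed.

Lemma dist_sin_le (x y : R) : `|sin x - sin y| <= `|x - y|.
Proof. by apply: dist_le_of_derive => z _; rewrite cos_max. Qed.

Lemma dist_expR_le (x y : R) : x <= 0 -> y <= 0 ->
  `|expR x - expR y| <= `|x - y|.
Proof.
move=> x_le0 y_le0; apply: dist_le_of_derive => z /andP[_ zxy].
rewrite ger0_norm ?expR_ge0 // expR_le1 (le_trans zxy) //.
by rewrite ge_max x_le0 y_le0.
Qed.

Lemma dist_expR_mul_le (f : R -> R) (a b c d : R) :
  (forall x, `|f x| <= 1) -> (forall x y, `|f x - f y| <= `|x - y|) ->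
  a <= 0 -> c <= 0 ->
  `|expR a * f b - expR c * f d| <= `|a - c| + `|b - d|.
Proof.
move=> f_le1 f_lip a_le0 c_le0.
have -> : expR a * f b - expR c * f d = (expR a - expR c) * f b + expR c * (f b - f d).
  by ring.
apply: (le_trans (ler_normD _ _)); apply: lerD; rewrite normrM.
  by rewrite -[leRHS]mulr1 ler_pM ?dist_expR_le.
by rewrite -[leRHS]mul1r ler_pM // ger0_norm ?expR_ge0 // expR_le1.
Qed.

End LipschitzBounds.

Section ComplexL1Norm.
Variable R : realType.

Definition cnorm1 (z : R[i]) : R := `|complex.Re z| + `|complex.Im z|.

Lemma cnorm1_ge0 z : 0 <= cnorm1 z.
Proof. by rewrite addr_ge0. Qed.

Lemma cnorm1D_le z z' : cnorm1 (z + z') <= cnorm1 z + cnorm1 z'.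
Proof.
rewrite /cnorm1 !raddfD /= addrACA.
by apply: lerD; apply: ler_normD.
Qed.

Lemma cnorm1_sum_le (I : finType) (F : I -> R[i]) :
  cnorm1 (\sum_i F i) <= \sum_i cnorm1 (F i).
Proof.
elim/big_rec2: _ => [|i y z _ yz]; first by rewrite /cnorm1 normr0 addr0.
exact: le_trans (cnorm1D_le _ _) (lerD (lexx _) yz).
Qed.

Lemma cnorm1_realM (a : R) z : cnorm1 (a%:C * z) = `|a| * cnorm1 z.
Proof. by case: z => x y; rewrite /cnorm1 /= !mul0r !subr0 !addr0 !normrM mulrDr. Qed.

Lemma Re_realM (a : R) (z : R[i]) : complex.Re (a%:C * z) = a * complex.Re z.
Proof. by case: z => x y /=; rewrite mul0r subr0. Qed.

Lemma Im_realM (a : R) (z : R[i]) : complex.Im (a%:C * z) = a * complex.Im z.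
Proof. by case: z => x y /=; rewrite mul0r addr0. Qed.

Lemma normc_le_cnorm1 (z : R[i]) : `|z| <= (cnorm1 z)%:C.
Proof.
rewrite normc_def lecR -ler_sqr ?nnegrE ?sqrtr_ge0 ?cnorm1_ge0 //.
rewrite sqr_sqrtr ?addr_ge0 ?sqr_ge0 // /cnorm1 sqrrD !real_normK ?num_real //.
by rewrite addrAC lerDl mulrn_wge0 ?mulr_ge0.
Qed.

Lemma cexp_dist_le (z z' : R[i]) :
  complex.Re z <= 0 -> complex.Re z' <= 0 ->
  `|cexp z - cexp z'| <= (2 * cnorm1 (z - z'))%:C.
Proof.
move=> z_le0 z'_le0; apply: le_trans (normc_le_cnorm1 _) _; rewrite lecR.
rewrite /cnorm1 /cexp !raddfB /= !(mul0r, oppr0, subr0, addr0) mulr_natl mulr2n.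
by apply: lerD; apply: dist_expR_mul_le => //;
  [exact: cos_max | exact: dist_cos_le | exact: sin_max | exact: dist_sin_le].
Qed.

End ComplexL1Norm.

Section SumsOfSquares.
Variables (R : rcfType) (I : finType).

Definition l2norm (f : I -> R) : R := Num.sqrt (\sum_i f i ^+ 2).

Lemma sum_sqr_ge0 (f : I -> R) : 0 <= \sum_i f i ^+ 2.
Proof. by apply: sumr_ge0 => i _; rewrite sqr_ge0. Qed.

Lemma l2norm_ge0 f : 0 <= l2norm f.
Proof. exact: sqrtr_ge0. Qed.

Lemma sqr_l2norm f : l2norm f ^+ 2 = \sum_i f i ^+ 2.
Proof. by rewrite sqr_sqrtr ?sum_sqr_ge0. Qed.

(* Lagrange's identity: the defect in Cauchy-Schwarz is a sum of squares. *)
Lemma sqr_sum_mul_le (a b : I -> R) :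
  (\sum_i a i * b i) ^+ 2 <= (\sum_i a i ^+ 2) * (\sum_i b i ^+ 2).
Proof.
have double (F G : I -> R) : (\sum_i F i) * (\sum_j G j) = \sum_i \sum_j F i * G j.
  by rewrite mulr_suml; apply: eq_bigr => i _; rewrite mulr_sumr.
have -> : (\sum_i a i * b i) ^+ 2 = \sum_i \sum_j (a i * b i) * (a j * b j).
  by rewrite expr2 double.
rewrite double.
have : 0 <= \sum_i \sum_j (a i * b j - a j * b i) ^+ 2.
  by apply: sumr_ge0 => i _; exact: sum_sqr_ge0.
have -> : \sum_i \sum_j (a i * b j - a j * b i) ^+ 2
    = \sum_i \sum_j a i ^+ 2 * b j ^+ 2 + \sum_i \sum_j a j ^+ 2 * b i ^+ 2
      - 2 * \sum_i \sum_j (a i * b i) * (a j * b j).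
  rewrite mulr_sumr -big_split -sumrB; apply: eq_bigr => i _.
  by rewrite mulr_sumr -big_split -sumrB; apply: eq_bigr => j _ /=; ring.
rewrite [X in _ + X - _]exchange_big /=; lra.
Qed.

Lemma norm_sum_mul_le (a b : I -> R) : `|\sum_i a i * b i| <= l2norm a * l2norm b.
Proof.
rewrite -sqrtrM ?sum_sqr_ge0 // -sqrtr_sqr.
by rewrite ler_sqrt ?mulr_ge0 ?sum_sqr_ge0 // sqr_sum_mul_le.
Qed.

Lemma l2normD_le (a b : I -> R) : l2norm (a \+ b) <= l2norm a + l2norm b.
Proof.
rewrite -ler_sqr ?nnegrE ?addr_ge0 ?l2norm_ge0 // sqrrD !sqr_l2norm.
have -> : \sum_i (a \+ b) i ^+ 2
    = \sum_i a i ^+ 2 + \sum_i b i ^+ 2 + (\sum_i a i * b i) *+ 2.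
  by rewrite -sumrMnl -!big_split /=; apply: eq_bigr => i _; rewrite sqrrD addrAC.
rewrite addrAC lerD2r lerD2l lerMn2r /=.
exact: le_trans (ler_norm _) (norm_sum_mul_le a b).
Qed.

Lemma l2norm_le_sum (f : I -> R) : (forall i, 0 <= f i) -> l2norm f <= \sum_i f i.
Proof.
move=> f_ge0; rewrite -ler_sqr ?nnegrE ?l2norm_ge0 ?sumr_ge0 // sqr_l2norm.
rewrite [leRHS]expr2 mulr_suml; apply: ler_sum => i _.
rewrite expr2 ler_wpM2l // (bigD1 i) //= lerDl.
exact: sumr_ge0.
Qed.

Lemma sum_sqr_le_sqr_sum (f : I -> R) : (forall i, 0 <= f i) ->
  \sum_i f i ^+ 2 <= (\sum_i f i) ^+ 2.
Proof.
move=> f_ge0; rewrite -sqr_l2norm ler_sqr ?nnegrE ?l2norm_ge0 ?sumr_ge0 //.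
exact: l2norm_le_sum.
Qed.

End SumsOfSquares.

Lemma sumr_delta (R : pzSemiRingType) (T : finType) (c : T) (g : T -> R) :
  \sum_y (y == c)%:R * g y = g c.
Proof.
rewrite (bigD1 c) //= eqxx mul1r big1 ?addr0 // => y /negbTE ->.
by rewrite mul0r.
Qed.

Lemma sumr_delta_sym (R : pzSemiRingType) (T : finType) (c : T) (g : T -> R) :
  \sum_y (c == y)%:R * g y = g c.
Proof. by under eq_bigr => y _ do rewrite eq_sym; exact: sumr_delta. Qed.

(* Expand the nonnegative sum of (g x - g (s x))^2; the squares reindex along s. *)
Lemma sum_sqr_sub_shift_ge0 (R : realDomainType) (T : finType) (s : T -> T)
    (g : T -> R) : injective s ->
  0 <= \sum_x (g x ^+ 2 - g x * g (s x)).
Proof.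
move=> s_inj.
have sum_sqr_s : \sum_x g (s x) ^+ 2 = \sum_x g x ^+ 2.
  by rewrite [RHS](reindex_inj s_inj).
have : 0 <= \sum_x (g x - g (s x)) ^+ 2 by apply: sumr_ge0 => x _; exact: sqr_ge0.
have -> : \sum_x (g x - g (s x)) ^+ 2 = (\sum_x (g x ^+ 2 - g x * g (s x))) *+ 2
    + (\sum_x g (s x) ^+ 2 - \sum_x g x ^+ 2).
  rewrite -sumrMnl -sumrB -big_split /=; apply: eq_bigr => x _.
  by rewrite sqrrB; ring.
by rewrite sum_sqr_s subrr addr0 pmulrn_lge0.
Qed.

Lemma injective_pair_map (A B : Type) (f : A -> A) (g : B -> B) :
  injective f -> injective g -> injective (fun x : A * B => (f x.1, g x.2)).
Proof. by move=> f_inj g_inj [a b] [a' b'] [/f_inj -> /g_inj ->]. Qed.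

Lemma mxBE (V : zmodType) (p q : nat) (A B : 'M[V]_(p, q)) i j :
  (A - B) i j = A i j - B i j.
Proof. by rewrite !mxE. Qed.

Section HilbertSchmidt.
Variables (R : realType) (N : nat).
Implicit Types A B H P Q : 'M[R]_N.

Lemma hs_norm_ge0 A : 0 <= hs_norm A.
Proof. exact: sqrtr_ge0. Qed.

Lemma sqr_hs_norm A : hs_norm A ^+ 2 = \sum_i \sum_j A i j ^+ 2.
Proof. by rewrite sqr_sqrtr //; apply: sumr_ge0 => i _; exact: sum_sqr_ge0. Qed.

Lemma hs_normE A : hs_norm A = l2norm (fun p : 'I_N * 'I_N => A p.1 p.2).
Proof. by rewrite /hs_norm /l2norm pair_big. Qed.

Lemma hs_normD_le A B : hs_norm (A + B) <= hs_norm A + hs_norm B.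
Proof.
rewrite !hs_normE; apply: le_trans (l2normD_le _ _).
by under eq_fun => p do rewrite mxE.
Qed.

Lemma hs_normN A : hs_norm (- A) = hs_norm A.
Proof.
rewrite /hs_norm; congr Num.sqrt.
by apply: eq_bigr => i _; apply: eq_bigr => j _; rewrite mxE sqrrN.
Qed.

Lemma hs_norm_tr A : hs_norm A^T = hs_norm A.
Proof.
rewrite /hs_norm exchange_big; congr Num.sqrt.
by apply: eq_bigr => i _; apply: eq_bigr => j _; rewrite mxE.
Qed.

Lemma hs_normM_le A B : hs_norm (A *m B) <= hs_norm A * hs_norm B.
Proof.
rewrite -ler_sqr ?nnegrE ?mulr_ge0 ?hs_norm_ge0 // exprMn !sqr_hs_norm.
apply: (@le_trans _ _ (\sum_i \sum_j (\sum_k A i k ^+ 2) * (\sum_k B k j ^+ 2))).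
  by apply: ler_sum => i _; apply: ler_sum => j _; rewrite mxE sqr_sum_mul_le.
rewrite mulr_suml; apply: ler_sum => i _.
by rewrite -mulr_sumr exchange_big.
Qed.

Lemma hs_norm_orthogonal Q : orthogonal_mx Q -> hs_norm Q = Num.sqrt N%:R.
Proof.
move=> QTQ; congr Num.sqrt; rewrite exchange_big /=.
have -> : N%:R = \sum_(j < N) (1%:M : 'M[R]_N) j j.
  by under eq_bigr => j _ do rewrite mxE eqxx; rewrite sumr_const card_ord.
rewrite -QTQ; apply: eq_bigr => j _; rewrite mxE.
by apply: eq_bigr => i _; rewrite mxE expr2.
Qed.

Lemma hs_norm_conjB_le H P Q : orthogonal_mx P -> orthogonal_mx Q ->
  hs_norm (Q^T *m H *m Q - P^T *m H *m P)
    <= 2 * Num.sqrt N%:R * hs_norm H * hs_norm (P - Q).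
Proof.
move=> orthP orthQ.
have -> : Q^T *m H *m Q - P^T *m H *m P
    = (Q - P)^T *m H *m Q + P^T *m H *m (Q - P).
  by rewrite linearB /= !mulmxBl !mulmxBr addrA subrK.
have hs_QP : hs_norm (Q - P) = hs_norm (P - Q) by rewrite -opprB hs_normN.
have hs_mul3 A B C : hs_norm (A *m B *m C) <= hs_norm A * hs_norm B * hs_norm C.
  by apply: le_trans (hs_normM_le _ _) _; rewrite ler_wpM2r ?hs_norm_ge0 ?hs_normM_le.
apply: le_trans (hs_normD_le _ _) _.
apply: le_trans (lerD (hs_mul3 _ _ _) (hs_mul3 _ _ _)) _.
rewrite !hs_norm_tr hs_QP (hs_norm_orthogonal orthP) (hs_norm_orthogonal orthQ).
set s := Num.sqrt _; set h := hs_norm H; set d := hs_norm (P - Q).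
by rewrite (_ : 2 * s * h * d = d * h * s + s * h * d) ?lexx //; ring.
Qed.

End HilbertSchmidt.

Section LatticeLaplacian.
Variables (R : realType) (n : nat) (Delta : R).

Lemma lap_mulE (x : site n) (g : site n -> R) :
  \sum_y lap Delta x y * g y = Delta ^- 2 * (4 * g x
    - (g (ordS x.1, x.2) + g (ord_pred x.1, x.2)
       + g (x.1, ordS x.2) + g (x.1, ord_pred x.2))).
Proof.
set c1 := (ordS x.1, x.2); set c2 := (ord_pred x.1, x.2).
set c3 := (x.1, ordS x.2); set c4 := (x.1, ord_pred x.2).
have lapE y : lap Delta x y * g y = Delta ^- 2 * (4 * ((x == y)%:R * g y)
    - ((y == c1)%:R * g y + (y == c2)%:R * g y
       + (y == c3)%:R * g y + (y == c4)%:R * g y)).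
  by rewrite /lap; ring.
under eq_bigr => y _ do rewrite lapE.
by rewrite -mulr_sumr sumrB !big_split /= -mulr_sumr sumr_delta_sym !sumr_delta.
Qed.

Lemma lap_form_ge0 (g : site n -> R) :
  0 <= \sum_x \sum_y lap Delta x y * g x * g y.
Proof.
have rowE x : \sum_y lap Delta x y * g x * g y = g x * \sum_y lap Delta x y * g y.
  by rewrite mulr_sumr; apply: eq_bigr => y _; ring.
under eq_bigr => x _ do rewrite rowE lap_mulE.
have -> : \sum_x g x * (Delta ^- 2 * (4 * g x
    - (g (ordS x.1, x.2) + g (ord_pred x.1, x.2)
       + g (x.1, ordS x.2) + g (x.1, ord_pred x.2))))
  = Delta ^- 2 * (\sum_x (g x ^+ 2 - g x * g (ordS x.1, x.2))
      + \sum_x (g x ^+ 2 - g x * g (ord_pred x.1, x.2))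
      + \sum_x (g x ^+ 2 - g x * g (x.1, ordS x.2))
      + \sum_x (g x ^+ 2 - g x * g (x.1, ord_pred x.2))).
  by rewrite -!big_split mulr_sumr /=; apply: eq_bigr => x _; ring.
have shift_ge0 (f1 f2 : 'I_n.+1 -> 'I_n.+1) :
    injective f1 -> injective f2 ->
    0 <= \sum_x (g x ^+ 2 - g x * g (f1 x.1, f2 x.2)).
  by move=> f1_inj f2_inj; apply: sum_sqr_sub_shift_ge0; exact: injective_pair_map.
rewrite mulr_ge0 ?invr_ge0 ?sqr_ge0 // !addr_ge0 //.
- exact: (shift_ge0 _ _ (@ordS_inj _) (@inj_id _)).
- exact: (shift_ge0 _ _ (@ord_pred_inj _) (@inj_id _)).
- exact: (shift_ge0 _ _ (@inj_id _) (@ordS_inj _)).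
- exact: (shift_ge0 _ _ (@inj_id _) (@ord_pred_inj _)).
Qed.

End LatticeLaplacian.

Section ComplexifiedOperator.
Variables (R : realType) (m : nat).
Implicit Types (A B D : 'M[R]_m) (v w : 'cV[R[i]]_m) (f u : 'I_m -> R).

Definition cmx A B : 'M[R[i]]_m := \matrix_(i, j) ((A i j)%:C - 'i * (B i j)%:C).

Definition re v i := complex.Re (v i 0).
Definition im v i := complex.Im (v i 0).
Definition sqnorm v := \sum_i (re v i ^+ 2 + im v i ^+ 2).
Definition rdot v w := \sum_i (re v i * re w i + im v i * im w i).

Lemma sqnormE v : sqnorm v = \sum_i re v i ^+ 2 + \sum_i im v i ^+ 2.
Proof. exact: big_split. Qed.

Lemma sqnorm_ge0 v : 0 <= sqnorm v.
Proof. by rewrite sqnormE addr_ge0 ?sum_sqr_ge0. Qed.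

Lemma sqnorm0 : sqnorm 0 = 0.
Proof. by rewrite /sqnorm big1 // => i _; rewrite /re /im mxE expr0n addr0. Qed.

Lemma sqnorm_eq0 v : sqnorm v = 0 -> v = 0.
Proof.
move=> /eqP; rewrite psumr_eq0 => [/allP v0|i _]; last by rewrite addr_ge0 ?sqr_ge0.
apply/matrixP => i j; rewrite (ord1 j) mxE.
have /v0 : i \in index_enum 'I_m by rewrite mem_index_enum.
rewrite /= paddr_eq0 ?sqr_ge0 // !sqrf_eq0 /re /im.
by case: (v i 0) => a b /= /andP[/eqP -> /eqP ->].
Qed.

Lemma l2norm_re_le v : l2norm (re v) <= Num.sqrt (sqnorm v).
Proof. by rewrite ler_sqrt ?sqnorm_ge0 // sqnormE lerDl sum_sqr_ge0. Qed.

Lemma l2norm_im_le v : l2norm (im v) <= Num.sqrt (sqnorm v).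
Proof. by rewrite ler_sqrt ?sqnorm_ge0 // sqnormE lerDr sum_sqr_ge0. Qed.

Lemma rdot_le (mu : R) v w : 2 * mu * rdot v w <= mu ^+ 2 * sqnorm v + sqnorm w.
Proof.
rewrite /rdot /sqnorm !mulr_sumr -big_split /=; apply: ler_sum => i _.
have := sqr_ge0 (mu * re v i - re w i); have := sqr_ge0 (mu * im v i - im w i).
nra.
Qed.

Lemma re_cmx_mul A B w i :
  re (cmx A B *m w) i = \sum_j (A i j * re w j + B i j * im w j).
Proof.
rewrite /re /im mxE raddf_sum; apply: eq_bigr => j _.
by rewrite mxE; case: (w j 0) => p q /=; ring.
Qed.

Lemma im_cmx_mul A B w i :
  im (cmx A B *m w) i = \sum_j (A i j * im w j - B i j * re w j).
Proof.
rewrite /re /im mxE raddf_sum; apply: eq_bigr => j _.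
by rewrite mxE; case: (w j 0) => p q /=; ring.
Qed.

Lemma cmxB A B B' : cmx A B' - cmx A B = cmx 0 (B' - B).
Proof. by apply/matrixP => i j; rewrite !mxE rmorph0 rmorphB; ring. Qed.

Definition coercive (mu : R) A :=
  forall f, mu * \sum_i f i ^+ 2 <= \sum_i \sum_j A i j * f i * f j.

Definition mx_opnorm_le D (beta : R) :=
  forall f, \sum_i (\sum_j D i j * f j) ^+ 2 <= beta ^+ 2 * \sum_i f i ^+ 2.

Lemma sqnorm_cmx0_mul_le D beta v : mx_opnorm_le D beta ->
  sqnorm (cmx 0 D *m v) <= beta ^+ 2 * sqnorm v.
Proof.
move=> D_le; rewrite !sqnormE mulrDr [leRHS]addrC; apply: lerD.
  under eq_bigr => i _ do
    (rewrite re_cmx_mul; under eq_bigr => j _ do rewrite mxE mul0r add0r).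
  exact: D_le.
under eq_bigr => i _ do
  (rewrite im_cmx_mul; under eq_bigr => j _ do rewrite mxE mul0r sub0r;
   rewrite sumrN sqrrN).
exact: D_le.
Qed.

Section Coercive.
Variables (mu : R) (A : 'M[R]_m).
Hypotheses (mu_gt0 : 0 < mu) (A_coercive : coercive mu A).

(* The cross terms <re w, B im w> - <im w, B re w> cancel because B is symmetric. *)
Lemma cmx_coercive B w : B^T = B -> mu * sqnorm w <= rdot w (cmx A B *m w).
Proof.
move=> B_sym.
have B_symE i j : B j i = B i j by rewrite -[in LHS]B_sym mxE.
have -> : rdot w (cmx A B *m w) =
    \sum_i \sum_j A i j * re w i * re w j + \sum_i \sum_j A i j * im w i * im w j
    + (\sum_i \sum_j B i j * re w i * im w j - \sum_i \sum_j B i j * im w i * re w j).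
  rewrite /rdot -!big_split -sumrB -big_split /=; apply: eq_bigr => i _.
  rewrite re_cmx_mul im_cmx_mul !mulr_sumr -!big_split -sumrB -big_split /=.
  by apply: eq_bigr => j _; ring.
rewrite [X in _ - X]exchange_big /=.
under [X in _ - X]eq_bigr => i _ do under eq_bigr => j _ do rewrite B_symE mulrAC.
by rewrite subrr addr0 sqnormE mulrDr lerD.
Qed.

Lemma cmx_mul_sqnorm_ge B w : B^T = B -> mu ^+ 2 * sqnorm w <= sqnorm (cmx A B *m w).
Proof.
move=> B_sym; have := cmx_coercive w B_sym; have := rdot_le mu w (cmx A B *m w).
have := sqnorm_ge0 w; have := mu_gt0; nra.
Qed.

Lemma cmx_unit B : B^T = B -> cmx A B \in unitmx.
Proof.
move=> B_sym; rewrite -unitmx_tr -row_free_unit -kermx_eq0.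
apply/eqP/row_matrixP => i; rewrite row0; set u := row i _.
have Ku : cmx A B *m u^T = 0.
  by rewrite -[cmx A B]trmxK -trmx_mul (sub_kermxP (row_sub i _)) trmx0.
apply: trmx_inj; rewrite trmx0; apply: sqnorm_eq0; apply/le_anti.
have := cmx_mul_sqnorm_ge u^T B_sym; rewrite Ku sqnorm0.
by rewrite pmulr_rle0 ?exprn_gt0 // => ->; rewrite sqnorm_ge0.
Qed.

Definition cvec u : 'cV[R[i]]_m := \col_i (u i)%:C.

Definition rform (K : 'M[R[i]]_m) u : R[i] := \sum_i (u i)%:C * (invmx K *m cvec u) i 0.

Lemma re_cvec u i : re (cvec u) i = u i.
Proof. by rewrite /re mxE. Qed.

Lemma im_cvec u i : im (cvec u) i = 0.
Proof. by rewrite /im mxE. Qed.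

Lemma sqnorm_cvec u : sqnorm (cvec u) = l2norm u ^+ 2.
Proof.
rewrite sqnormE sqr_l2norm.
have -> : \sum_i im (cvec u) i ^+ 2 = 0.
  by rewrite big1 // => i _; rewrite im_cvec expr0n.
by rewrite addr0; apply: eq_bigr => i _; rewrite re_cvec.
Qed.

Lemma Re_rform_ge0 B u : B^T = B -> 0 <= complex.Re (rform (cmx A B) u).
Proof.
move=> B_sym; set w := invmx (cmx A B) *m cvec u.
have Kw : cmx A B *m w = cvec u by rewrite /w mulKVmx ?cmx_unit.
have -> : complex.Re (rform (cmx A B) u) = rdot w (cmx A B *m w).
  rewrite /rform raddf_sum Kw; apply: eq_bigr => i _.
  by rewrite /= Re_realM re_cvec im_cvec mulr0 addr0 mulrC.
by apply: le_trans (cmx_coercive w B_sym); rewrite mulr_ge0 ?sqnorm_ge0 ?ltW.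
Qed.

Section Perturbation.
Variables (B B' : 'M[R]_m) (beta : R).
Hypotheses (B_sym : B^T = B) (B'_sym : B'^T = B').
Hypotheses (beta_ge0 : 0 <= beta) (BB'_le : mx_opnorm_le (B' - B) beta).

(* Resolvent identity: K (K^-1 u - K'^-1 u) = (K' - K) K'^-1 u. *)
Lemma resolvent_dist_le u :
  mu ^+ 2 * Num.sqrt (sqnorm (invmx (cmx A B) *m cvec u
                              - invmx (cmx A B') *m cvec u))
    <= beta * l2norm u.
Proof.
set w := invmx (cmx A B) *m cvec u; set w' := invmx (cmx A B') *m cvec u.
have Kw' : cmx A B' *m w' = cvec u by rewrite /w' mulKVmx ?cmx_unit.
have Kd : cmx A B *m (w - w') = cmx 0 (B' - B) *m w'.
  by rewrite mulmxBr /w mulKVmx ?cmx_unit // -[in LHS]Kw' -mulmxBl cmxB.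
have := cmx_mul_sqnorm_ge (w - w') B_sym; rewrite Kd => d_le.
have Kd_le := sqnorm_cmx0_mul_le w' BB'_le.
have := cmx_mul_sqnorm_ge w' B'_sym; rewrite Kw' sqnorm_cvec => w'_le.
have mu_ge0 := ltW mu_gt0.
rewrite -ler_sqr ?nnegrE ?mulr_ge0 ?sqrtr_ge0 ?l2norm_ge0 //.
rewrite !exprMn sqr_sqrtr ?sqnorm_ge0 //.
apply: (@le_trans _ _ (mu ^+ 2 * (beta ^+ 2 * sqnorm w'))).
  by rewrite -mulrA ler_wpM2l ?exprn_ge0 // (le_trans d_le).
by rewrite mulrCA ler_wpM2l ?sqr_ge0.
Qed.

Lemma cnorm1_rformB_le u :
  cnorm1 (rform (cmx A B) u - rform (cmx A B') u)
    <= (beta * l2norm u ^+ 2 / mu ^+ 2) *+ 2.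
Proof.
set w := invmx (cmx A B) *m cvec u; set w' := invmx (cmx A B') *m cvec u.
have proj_le (g : 'cV[R[i]]_m -> 'I_m -> R) :
    (forall v, l2norm (g v) <= Num.sqrt (sqnorm v)) ->
    `|\sum_i u i * g (w - w') i| <= beta * l2norm u ^+ 2 / mu ^+ 2.
  move=> g_le; apply: le_trans (norm_sum_mul_le _ _) _.
  rewrite ler_pdivlMr ?exprn_gt0 //.
  apply: (@le_trans _ _ (l2norm u * (mu ^+ 2 * Num.sqrt (sqnorm (w - w'))))).
    rewrite mulrAC -mulrA; apply: ler_wpM2l; first exact: l2norm_ge0.
    by apply: ler_wpM2l; [exact: exprn_ge0 (ltW mu_gt0) | exact: g_le].
  rewrite [l2norm u ^+ 2]expr2 [leRHS]mulrCA.
  by apply: ler_wpM2l; [exact: l2norm_ge0 | exact: resolvent_dist_le].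
have -> : rform (cmx A B) u - rform (cmx A B') u = \sum_i (u i)%:C * (w - w') i 0.
  rewrite /rform -sumrB; apply: eq_bigr => i _.
  by rewrite !mxE mulrBr.
rewrite /cnorm1 !raddf_sum /= mulr2n.
apply: lerD.
  by under eq_bigr do rewrite Re_realM; exact: proj_le (@l2norm_re_le).
by under eq_bigr do rewrite Im_realM; exact: proj_le (@l2norm_im_le).
Qed.

End Perturbation.

End Coercive.
End ComplexifiedOperator.

Section LatticeModel.
Variables (R : realType) (n N : nat) (Delta mu : R) (Mhat : site n -> 'M[R]_N).
Hypotheses (mu_gt0 : 0 < mu) (Mhat_diag : forall x, is_diag_mx (Mhat x)).

Local Notation T := (idx n N).
Local Notation m := #|{: idx n N}|.
Local Notation ev := (@enum_val T (mem {: T})).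

Lemma sum_idx (V : nmodType) (F : T -> V) : \sum_s F s = \sum_x \sum_a F (x, a).
Proof. by rewrite pair_big /=; apply: eq_bigr => -[x a]. Qed.

Lemma sum_enum_rank (V : nmodType) (f : 'I_m -> V) : \sum_i f i = \sum_s f (enum_rank s).
Proof. by rewrite [RHS]big_enum_val; apply: eq_bigr => i _; rewrite enum_valK. Qed.

Definition lapmu (s t : T) : R :=
  (lap Delta s.1 t.1 + mu * (s.1 == t.1)%:R) * (s.2 == t.2)%:R.

Definition Mfield_op (O : site n -> 'M[R]_N) (s t : T) : R :=
  (s.1 == t.1)%:R * Mfield Mhat O s.1 s.2 t.2.

Definition lapmu_mx : 'M[R]_m := \matrix_(i, j) lapmu (ev i) (ev j).

Definition Mfield_mx O : 'M[R]_m := \matrix_(i, j) Mfield_op O (ev i) (ev j).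

Lemma Mfield_mxE O i j : Mfield_mx O i j = Mfield_op O (ev i) (ev j).
Proof. exact: mxE. Qed.

Lemma Kmx_cmx O : Kmx Delta mu Mhat O = cmx lapmu_mx (Mfield_mx O).
Proof.
apply/matrixP => i j; rewrite !mxE /lapmu /Mfield_op.
by case: (ev i) => x a; case: (ev j) => y b.
Qed.

Lemma lapmu_form_ge (F : T -> R) :
  mu * \sum_s F s ^+ 2 <= \sum_s \sum_t lapmu s t * F s * F t.
Proof.
have colorE x a y : \sum_b lapmu (x, a) (y, b) * F (x, a) * F (y, b)
    = (lap Delta x y + mu * (x == y)%:R) * F (x, a) * F (y, a).
  have /= <- := sumr_delta_sym a
    (fun b => (lap Delta x y + mu * (x == y)%:R) * F (x, a) * F (y, b)).
  by apply: eq_bigr => b _; rewrite /lapmu /=; ring.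
have -> : \sum_s \sum_t lapmu s t * F s * F t
    = \sum_a \sum_x \sum_y (lap Delta x y + mu * (x == y)%:R) * F (x, a) * F (y, a).
  rewrite sum_idx exchange_big /=; apply: eq_bigr => a _; apply: eq_bigr => x _.
  by rewrite sum_idx; apply: eq_bigr => y _; rewrite colorE.
rewrite sum_idx exchange_big /= mulr_sumr; apply: ler_sum => a _.
have -> : \sum_x \sum_y (lap Delta x y + mu * (x == y)%:R) * F (x, a) * F (y, a)
    = \sum_x \sum_y lap Delta x y * F (x, a) * F (y, a) + mu * \sum_x F (x, a) ^+ 2.
  rewrite mulr_sumr -big_split; apply: eq_bigr => x _ /=; rewrite expr2 mulrA.
  have /= <- := sumr_delta_sym x (fun y => mu * F (x, a) * F (y, a)).
  by rewrite -big_split; apply: eq_bigr => y _ /=; ring.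
by rewrite lerDr (lap_form_ge0 Delta (fun x => F (x, a))).
Qed.

Lemma lapmu_mx_coercive : coercive mu lapmu_mx.
Proof.
move=> f.
have -> : \sum_i \sum_j lapmu_mx i j * f i * f j
    = \sum_s \sum_t lapmu s t * f (enum_rank s) * f (enum_rank t).
  rewrite sum_enum_rank; apply: eq_bigr => s _; rewrite sum_enum_rank.
  by apply: eq_bigr => t _; rewrite mxE !enum_rankK.
by rewrite sum_enum_rank lapmu_form_ge.
Qed.

Lemma Mfield_tr O x : (Mfield Mhat O x)^T = Mfield Mhat O x.
Proof.
rewrite /Mfield; have /diag_mxP[d ->] := Mhat_diag x.
by rewrite !trmx_mul trmxK tr_diag_mx mulmxA.
Qed.

Lemma Mfield_mx_sym O : (Mfield_mx O)^T = Mfield_mx O.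
Proof.
apply/matrixP => i j; rewrite !mxE /Mfield_op eq_sym.
case: eqP => [-> | _]; last by rewrite !mul0r.
by rewrite -[in RHS]Mfield_tr [in RHS]mxE.
Qed.

(* Only the diagonal x = y blocks survive; each block is bounded by Cauchy-Schwarz
   in the Hilbert-Schmidt norm, and the sum of squares by the square of the sum. *)
Lemma Mfield_mxB_opnorm_le O O' : mx_opnorm_le (Mfield_mx O' - Mfield_mx O)
  (\sum_x hs_norm (Mfield Mhat O' x - Mfield Mhat O x)).
Proof.
move=> f.
have rowE x a : \sum_j (Mfield_mx O' - Mfield_mx O) (enum_rank (x, a)) j * f j
    = \sum_b (Mfield Mhat O' x - Mfield Mhat O x) a b * f (enum_rank (x, b)).
  rewrite sum_enum_rank sum_idx.
  have /= <- := sumr_delta_sym x (fun y =>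
    \sum_b (Mfield Mhat O' x - Mfield Mhat O x) a b * f (enum_rank (y, b))).
  apply: eq_bigr => y _; rewrite mulr_sumr; apply: eq_bigr => b _.
  by rewrite !mxBE !Mfield_mxE !enum_rankK /Mfield_op /=; ring.
rewrite (sum_enum_rank (fun i => f i ^+ 2)) sum_enum_rank sum_idx.
under eq_bigr => x _ do under eq_bigr => a _ do rewrite rowE.
set Phi := \sum_s f (enum_rank s) ^+ 2.
have Phi_ge x : \sum_b f (enum_rank (x, b)) ^+ 2 <= Phi.
  rewrite /Phi sum_idx (bigD1 x) //= lerDl.
  by apply: sumr_ge0 => y _; exact: sum_sqr_ge0.
apply: (@le_trans _ _
    (\sum_x hs_norm (Mfield Mhat O' x - Mfield Mhat O x) ^+ 2 * Phi)).
  apply: ler_sum => x _; set E := Mfield Mhat O' x - Mfield Mhat O x.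
  apply: (@le_trans _ _ (hs_norm E ^+ 2 * \sum_b f (enum_rank (x, b)) ^+ 2)).
    by rewrite sqr_hs_norm mulr_suml; apply: ler_sum => a _; exact: sqr_sum_mul_le.
  by rewrite ler_wpM2l ?sqr_ge0 ?Phi_ge.
rewrite -mulr_suml ler_wpM2r ?sum_sqr_ge0 // sum_sqr_le_sqr_sum // => x.
exact: hs_norm_ge0.
Qed.

Lemma Kmx_unit O : Kmx Delta mu Mhat O \in unitmx.
Proof. by rewrite Kmx_cmx (cmx_unit mu_gt0 lapmu_mx_coercive) ?Mfield_mx_sym. Qed.

Variable J : site n -> 'M[R]_N.

Definition Jcol (b : 'I_N) (i : 'I_m) : R := J (ev i).1 (ev i).2 b.

Lemma quad_formE O : quad_form Delta mu Mhat O J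
  = (- (2^-1 * Delta ^+ 2))%:C * \sum_b rform (Kmx Delta mu Mhat O) (Jcol b).
Proof.
have -> : (- (2^-1 * Delta ^+ 2))%:C = - (2%:R)^-1 * (Delta ^+ 2)%:C :> R[i].
  by rewrite rmorphN rmorphM /= fmorphV rmorph_nat mulNr.
rewrite /quad_form -mulrA; congr (_ * (_ * _)).
rewrite /rform [RHS]exchange_big /= [RHS]sum_enum_rank [RHS]sum_idx.
apply: eq_bigr => x _; apply: eq_bigr => a _; apply: eq_bigr => b _.
rewrite /Jcol enum_rankK !mxE; congr (_ * _).
by apply: eq_bigr => j _; rewrite mxE.
Qed.

Definition Jnorm2 : R := \sum_b l2norm (Jcol b) ^+ 2.

Lemma Jnorm2_ge0 : 0 <= Jnorm2.
Proof. by apply: sumr_ge0 => b _; exact: sqr_ge0. Qed.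

Lemma Re_quad_form_le0 O : complex.Re (quad_form Delta mu Mhat O J) <= 0.
Proof.
rewrite quad_formE Re_realM mulNr oppr_le0; apply: mulr_ge0.
  by rewrite mulr_ge0 ?invr_ge0 ?ler0n ?sqr_ge0.
rewrite raddf_sum; apply: sumr_ge0 => b _ /=; rewrite Kmx_cmx.
by apply: (Re_rform_ge0 mu_gt0); [exact: lapmu_mx_coercive | exact: Mfield_mx_sym].
Qed.

Lemma cnorm1_quad_formB_le O O' :
  cnorm1 (quad_form Delta mu Mhat O J - quad_form Delta mu Mhat O' J)
    <= Delta ^+ 2 * Jnorm2 / mu ^+ 2
       * \sum_x hs_norm (Mfield Mhat O' x - Mfield Mhat O x).
Proof.
set beta := \sum_x _.
have beta_ge0 : 0 <= beta by apply: sumr_ge0 => x _; exact: hs_norm_ge0.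
have c_ge0 : 0 <= 2^-1 * Delta ^+ 2 by rewrite mulr_ge0 ?invr_ge0 ?ler0n ?sqr_ge0.
rewrite !quad_formE -mulrBr cnorm1_realM -sumrB normrN ger0_norm //.
have sum_le : cnorm1 (\sum_b (rform (Kmx Delta mu Mhat O) (Jcol b)
      - rform (Kmx Delta mu Mhat O') (Jcol b)))
    <= \sum_b (beta * l2norm (Jcol b) ^+ 2 / mu ^+ 2) *+ 2.
  apply: le_trans (cnorm1_sum_le _) _; apply: ler_sum => b _; rewrite !Kmx_cmx.
  apply: cnorm1_rformB_le => //.
  - exact: lapmu_mx_coercive.
  - exact: Mfield_mx_sym.
  - exact: Mfield_mx_sym.
  - exact: Mfield_mxB_opnorm_le.
apply: le_trans (ler_wpM2l c_ge0 sum_le) _.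
rewrite sumrMnl -mulr_suml -mulr_sumr -/Jnorm2.
suff -> : 2^-1 * Delta ^+ 2 * ((beta * Jnorm2 / mu ^+ 2) *+ 2)
    = Delta ^+ 2 * Jnorm2 / mu ^+ 2 * beta by [].
by rewrite mulr2n; field; rewrite gt_eqF.
Qed.

Lemma Mfield_dist_le O O' :
  (forall x, orthogonal_mx (O x)) -> (forall x, orthogonal_mx (O' x)) ->
  \sum_x hs_norm (Mfield Mhat O' x - Mfield Mhat O x)
    <= 2 * Num.sqrt N%:R * (\sum_x hs_norm (Mhat x)) * \sum_x hs_norm (O x - O' x).
Proof.
move=> orthO orthO'; rewrite mulr_sumr; apply: ler_sum => x _.
apply: le_trans (hs_norm_conjB_le _ (orthO x) (orthO' x)) _.
rewrite ler_wpM2r ?hs_norm_ge0 // ler_wpM2l ?mulr_ge0 ?sqrtr_ge0 //.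
by rewrite (bigD1 x) //= lerDl; apply: sumr_ge0 => y _; exact: hs_norm_ge0.
Qed.

End LatticeModel.

Theorem mainTheorem1 (R : realType) (n N : nat) (Delta mu : R)
  (Mhat J : site n -> 'M[R]_N) :
  (0 < N)%N -> 0 < Delta -> 0 < mu ->
  (forall x, is_diag_mx (Mhat x)) ->
  (forall O : site n -> 'M[R]_N, (forall x, orthogonal_mx (O x)) ->
     Kmx Delta mu Mhat O \in unitmx) /\
  (exists C : R, forall O O' : site n -> 'M[R]_N,
     (forall x, orthogonal_mx (O x)) -> (forall x, orthogonal_mx (O' x)) ->
     `|Zfun Delta mu Mhat O J - Zfun Delta mu Mhat O' J|
       <= (C * field_dist Delta O O')%:C).
Proof.
move=> _ _ mu_gt0 Mhat_diag; split; first by move=> O _; exact: Kmx_unit.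
pose s : R := Num.sqrt N%:R; pose HM := \sum_x hs_norm (Mhat x); pose Jn := Jnorm2 J.
exists (4 * s * HM * Jn / mu ^+ 2); move=> O O' orthO orthO'.
have Re_le0 := Re_quad_form_le0 Delta mu_gt0 Mhat_diag J.
apply: le_trans (cexp_dist_le (Re_le0 O) (Re_le0 O')) _; rewrite lecR /field_dist.
have quad_le := cnorm1_quad_formB_le Delta mu_gt0 Mhat_diag J O O'.
have Mfield_le := Mfield_dist_le Mhat orthO orthO'.
set S := \sum_x hs_norm (O x - O' x).
suff -> : 4 * s * HM * Jn / mu ^+ 2 * (Delta ^+ 2 * S)
    = 2 * (Delta ^+ 2 * Jn / mu ^+ 2 * (2 * s * HM * S)).
  apply: ler_wpM2l => //; apply: le_trans quad_le _.
  by apply: ler_wpM2l => //; rewrite divr_ge0 ?sqr_ge0 // mulr_ge0 ?sqr_ge0 ?Jnorm2_ge0.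
clearbody s HM Jn S; ring.
Qed.
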